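(* Let $a,b,c,d>0$ and let $G_B:\mathbb R^2\to\mathbb R^2$ be given by $G_B(0)=0$ and $G_B(u)=\frac{1}{|u|}\big((au_1^2+bu_2^2)u_1,\ (cu_1^2+du_2^2)u_2\big)$ for $u\neq0$. If $$\max\{a+c,b+d\}\le 2(b+c+2\sqrt{ad})\quad\text{and}\quad 2(b+c-2\sqrt{ad})\le\min\{a+c,b+d\},$$ then $G_B$ is monotone. If both inequalities are strict, then $G_B$ is $3$-monotone.
   Context: A map $F:\mathbb R^n\to\mathbb R^n$ is monotone if $(F(u)-F(v))\cdot(u-v)\ge0$ for all $u,v$; for $\alpha>0$ it is $\alpha$-monotone if there is $C>0$ with $(F(u)-F(v))\cdot(u-v)\ge C|u-v|^\alpha$ for all $u,v\in\mathbb R^n$. $|\cdot|$ is the Euclidean norm. *)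

From Stdlib Require Import Reals.
Open Scope R_scope.

Definition vec2 := (R * R)%type.

Definition dot2 (u v : vec2) : R := fst u * fst v + snd u * snd v.
Definition sub2 (u v : vec2) : vec2 := (fst u - fst v, snd u - snd v).
Definition norm2 (u : vec2) : R := sqrt (fst u ^ 2 + snd u ^ 2).

(* real power x^a for x >= 0, with the convention 0^a = 0 (a > 0) *)
Definition rpow (x a : R) : R := if Req_EM_T x 0 then 0 else Rpower x a.

Definition monotone2 (F : vec2 -> vec2) : Prop :=
  forall u v : vec2, 0 <= dot2 (sub2 (F u) (F v)) (sub2 u v).

Definition alpha_monotone2 (alpha : R) (F : vec2 -> vec2) : Prop :=
  exists C : R, 0 < C /\
    forall u v : vec2, C * rpow (norm2 (sub2 u v)) alpha <= dot2 (sub2 (F u) (F v)) (sub2 u v).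

Definition G_B (a b c d : R) (u : vec2) : vec2 :=
  if Req_EM_T (norm2 u) 0 then (0, 0)
  else ( (a * fst u ^ 2 + b * snd u ^ 2) * fst u / norm2 u,
         (c * fst u ^ 2 + d * snd u ^ 2) * snd u / norm2 u ).

From Stdlib Require Import Reals Lra Psatz.
From Coquelicot Require Import Coquelicot.
Open Scope R_scope.

(* Along a segment [v + t h]
   missing the origin, [t |-> <G_B (v + t h), h>] has derivative [Q(u, h) / |u|^3], where
   [Q(u, .)] is a quadratic form in [h] whose discriminant, as a polynomial in [u1^2] and
   [u2^2], has nonnegative coefficients as soon as [(2b+c-a)^2 <= 16ad] and
   [(b+2c-d)^2 <= 16ad]; both follow from the non-strict hypotheses. Hence the derivative is
   at least [kappa |u| |h|^2], and as a quarter of the segment stays at distance [|h|/4] from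
   the origin, the mean value theorem gives [<G_B (v+h) - G_B v, h> >= kappa |h|^3 / 64].
   When [v] and [h] are parallel, the homogeneity [G_B (mu h) = mu |mu| G_B h] gives the bound
   directly. So [G_B] is 3-monotone already under the non-strict inequalities. *)

Lemma sum_squares_eq0 x y : x ^ 2 + y ^ 2 = 0 -> x = 0 /\ y = 0.
Proof. intros h. pose proof (pow2_ge_0 x); pose proof (pow2_ge_0 y). split; nra. Qed.

Lemma quad_form_nonneg A B C p q :
  0 <= A -> 0 <= C -> B ^ 2 <= 4 * A * C -> 0 <= A * p ^ 2 + B * p * q + C * q ^ 2.
Proof.
  intros hA hC hB.
  destruct (Rle_lt_or_eq_dec 0 A hA) as [hA'|<-].
  - assert (e : 4 * A * (A * p ^ 2 + B * p * q + C * q ^ 2)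
                = (2 * A * p + B * q) ^ 2 + (4 * A * C - B ^ 2) * q ^ 2) by ring.
    pose proof (pow2_ge_0 (2 * A * p + B * q)); pose proof (pow2_ge_0 q). nra.
  - assert (B = 0) by nra. subst B. pose proof (pow2_ge_0 q). nra.
Qed.

Lemma quad_form_lower_bound A B C D K p q :
  0 <= A -> 0 <= C -> 0 <= D -> D <= 4 * A * C - B ^ 2 -> A + C <= K ->
  D * (p ^ 2 + q ^ 2) <= 4 * K * (A * p ^ 2 + B * p * q + C * q ^ 2).
Proof.
  intros hA hC hD hB hK.
  assert (hQ := quad_form_nonneg A B C p q hA hC ltac:(lra)).
  assert (e : 4 * (A + C) * (A * p ^ 2 + B * p * q + C * q ^ 2)
              = (2 * A * p + B * q) ^ 2 + (2 * C * q + B * p) ^ 2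
                + (4 * A * C - B ^ 2) * (p ^ 2 + q ^ 2)) by ring.
  pose proof (pow2_ge_0 (2 * A * p + B * q)); pose proof (pow2_ge_0 (2 * C * q + B * p)).
  pose proof (pow2_ge_0 p); pose proof (pow2_ge_0 q).
  nra.
Qed.

Lemma signed_square_increment l : 1 / 2 <= (l + 1) * Rabs (l + 1) - l * Rabs l.
Proof.
  pose proof (pow2_ge_0 (2 * l + 1)).
  destruct (Rcase_abs (l + 1));
    [rewrite (Rabs_left (l + 1)) by lra | rewrite (Rabs_right (l + 1)) by lra];
    (destruct (Rcase_abs l); [rewrite (Rabs_left l) by lra | rewrite (Rabs_right l) by lra]);
    nra.
Qed.

Lemma increment_lower_bound (f f' : R -> R) (L : R) :
  (forall t, 0 <= t <= 1 -> derivable_pt_lim f t (f' t)) ->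
  (forall t, 0 <= t <= 1 -> 0 <= f' t) ->
  (forall t, 0 <= t <= 1 / 4 -> L <= f' t) \/ (forall t, 3 / 4 <= t <= 1 -> L <= f' t) ->
  L / 4 <= f 1 - f 0.
Proof.
  intros hder hpos hL.
  assert (hmvt : forall s e K, 0 <= s < e -> e <= 1 -> (forall t, s <= t <= e -> K <= f' t) ->
            K * (e - s) <= f e - f s).
  { intros s e K hs he hK.
    destruct (MVT_cor2 f f' s e ltac:(lra) ltac:(intros; apply hder; lra)) as [t [-> ht]].
    apply Rmult_le_compat_r; [lra | apply hK; lra]. }
  destruct hL as [hL|hL].
  - assert (L * (1 / 4 - 0) <= f (1 / 4) - f 0) by (apply hmvt; [lra | lra | exact hL]).
    assert (0 * (1 - 1 / 4) <= f 1 - f (1 / 4))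
      by (apply hmvt; [lra | lra | intros; apply hpos; lra]).
    lra.
  - assert (0 * (3 / 4 - 0) <= f (3 / 4) - f 0)
      by (apply hmvt; [lra | lra | intros; apply hpos; lra]).
    assert (L * (1 - 3 / 4) <= f 1 - f (3 / 4)) by (apply hmvt; [lra | lra | exact hL]).
    lra.
Qed.

Lemma rpow_3 x : 0 <= x -> rpow x 3 = x ^ 3.
Proof.
  intros hx. unfold rpow. destruct (Req_EM_T x 0) as [->|hx0]; [simpl; ring|].
  replace 3 with (INR 3) at 1 by (simpl; ring). apply Rpower_pow; lra.
Qed.

Lemma rpow_nonneg x e : 0 <= rpow x e.
Proof.
  unfold rpow. destruct (Req_EM_T x 0); [lra|]. left; apply exp_pos.
Qed.

Lemma lagrange_identity_segment v1 v2 h1 h2 t :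
  ((v1 + t * h1) ^ 2 + (v2 + t * h2) ^ 2) * (h1 ^ 2 + h2 ^ 2)
  = (v1 * h1 + v2 * h2 + t * (h1 ^ 2 + h2 ^ 2)) ^ 2 + (v1 * h2 - v2 * h1) ^ 2.
Proof. ring. Qed.

Lemma segment_avoids_origin v1 v2 h1 h2 t : v1 * h2 - v2 * h1 <> 0 ->
  0 < (v1 + t * h1) ^ 2 + (v2 + t * h2) ^ 2.
Proof.
  intros hx.
  assert (hl := lagrange_identity_segment v1 v2 h1 h2 t).
  assert (0 < (v1 * h2 - v2 * h1) ^ 2) by (rewrite <- Rsqr_pow2; apply Rsqr_pos_lt, hx).
  pose proof (pow2_ge_0 (v1 * h1 + v2 * h2 + t * (h1 ^ 2 + h2 ^ 2))).
  pose proof (pow2_ge_0 (v1 + t * h1)); pose proof (pow2_ge_0 (v2 + t * h2)).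
  pose proof (pow2_ge_0 h1); pose proof (pow2_ge_0 h2).
  nra.
Qed.

Lemma segment_quarter_far_from_origin v1 v2 h1 h2 : 0 < h1 ^ 2 + h2 ^ 2 ->
  (forall t, 0 <= t <= 1 / 4 ->
     (h1 ^ 2 + h2 ^ 2) / 16 <= (v1 + t * h1) ^ 2 + (v2 + t * h2) ^ 2) \/
  (forall t, 3 / 4 <= t <= 1 ->
     (h1 ^ 2 + h2 ^ 2) / 16 <= (v1 + t * h1) ^ 2 + (v2 + t * h2) ^ 2).
Proof.
  intros hH.
  set (H := h1 ^ 2 + h2 ^ 2) in *.
  set (k := v1 * h1 + v2 * h2).
  assert (hfar : forall t, H / 4 <= Rabs (k + t * H) ->
            H / 16 <= (v1 + t * h1) ^ 2 + (v2 + t * h2) ^ 2).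
  { intros t ht.
    assert (hl := lagrange_identity_segment v1 v2 h1 h2 t). fold H k in hl.
    pose proof (pow2_ge_0 (v1 * h2 - v2 * h1)).
    assert (H / 4 * (H / 4) <= (k + t * H) ^ 2).
    { rewrite <- pow2_abs. simpl. rewrite Rmult_1_r.
      apply Rmult_le_compat; lra. }
    apply Rmult_le_reg_r with H; [exact hH|]. nra. }
  destruct (Rle_or_lt 0 (k + H / 2)) as [hk|hk]; [right|left]; intros t ht; apply hfar.
  - rewrite Rabs_right; nra.
  - rewrite Rabs_left; nra.
Qed.

Definition cubic_dot (a b c d x y p q : R) : R :=
  (a*x^2 + b*y^2)*x*p + (c*x^2 + d*y^2)*y*q.

Lemma G_B_dot a b c d x y p q : 0 < x ^ 2 + y ^ 2 ->
  dot2 (G_B a b c d (x, y)) (p, q) = cubic_dot a b c d x y p q / sqrt (x ^ 2 + y ^ 2).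
Proof.
  intros hq. unfold G_B, norm2, dot2, cubic_dot; cbn [fst snd].
  assert (hS : 0 < sqrt (x ^ 2 + y ^ 2)) by (apply sqrt_lt_R0; lra).
  destruct (Req_EM_T (sqrt (x ^ 2 + y ^ 2)) 0) as [e|_]; [lra|].
  cbn [fst snd]. field. lra.
Qed.

Lemma G_B_dot_scale a b c d mu h1 h2 :
  dot2 (G_B a b c d (mu * h1, mu * h2)) (h1, h2)
  = mu * Rabs mu * dot2 (G_B a b c d (h1, h2)) (h1, h2).
Proof.
  destruct (Req_dec (h1 ^ 2 + h2 ^ 2) 0) as [h0|hH].
  - destruct (sum_squares_eq0 _ _ h0) as [-> ->]. unfold dot2; simpl. ring.
  - assert (hH' : 0 < h1 ^ 2 + h2 ^ 2)
      by (pose proof (pow2_ge_0 h1); pose proof (pow2_ge_0 h2); lra).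
    destruct (Req_dec mu 0) as [->|hmu].
    + rewrite !Rmult_0_l. unfold G_B, norm2, dot2; simpl.
      replace (0 * (0 * 1) + 0 * (0 * 1)) with 0 by ring. rewrite sqrt_0.
      destruct (Req_EM_T 0 0) as [_|n]; [simpl; ring | lra].
    + assert (hmu2 : 0 < Rsqr mu) by (apply Rlt_0_sqr; exact hmu).
      assert (hsc : 0 < (mu * h1) ^ 2 + (mu * h2) ^ 2) by (unfold Rsqr in hmu2; nra).
      rewrite !G_B_dot by assumption.
      replace ((mu * h1) ^ 2 + (mu * h2) ^ 2) with (Rsqr mu * (h1 ^ 2 + h2 ^ 2))
        by (unfold Rsqr; ring).
      rewrite sqrt_mult, sqrt_Rsqr_abs by (apply Rle_0_sqr || lra).
      assert (Rabs mu <> 0) by (apply Rabs_no_R0; exact hmu).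
      assert (hS : 0 < sqrt (h1 ^ 2 + h2 ^ 2)) by (apply sqrt_lt_R0; lra).
      unfold cubic_dot.
      destruct (Rcase_abs mu) as [hm|hm];
        [rewrite Rabs_left in * by lra | rewrite Rabs_right in * by lra];
        field; lra.
Qed.

(* [|u|^3 * h^T DG_B(u) h] for [u = (x, y)] and [h = (p, q)]. *)
Definition dG_form (a b c d x y p q : R) : R :=
  (2*a*x^4 + 3*a*x^2*y^2 + b*y^4) * p^2
  + x*y*((2*b+c-a)*x^2 + (b+2*c-d)*y^2) * p*q
  + (c*x^4 + 3*d*x^2*y^2 + 2*d*y^4) * q^2.

Definition segment_dot (a b c d v1 v2 h1 h2 t : R) : R :=
  cubic_dot a b c d (v1+t*h1) (v2+t*h2) h1 h2 / sqrt ((v1+t*h1)^2 + (v2+t*h2)^2).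

Lemma segment_dot_derivative a b c d v1 v2 h1 h2 t :
  0 < (v1+t*h1)^2 + (v2+t*h2)^2 ->
  derivable_pt_lim (segment_dot a b c d v1 v2 h1 h2) t
    (dG_form a b c d (v1+t*h1) (v2+t*h2) h1 h2 / sqrt ((v1+t*h1)^2 + (v2+t*h2)^2) ^ 3).
Proof.
  intros hq.
  assert (hS : 0 < sqrt ((v1+t*h1)^2 + (v2+t*h2)^2)) by (apply sqrt_lt_R0; lra).
  assert (hSS := sqrt_sqrt _ (Rlt_le _ _ hq)).
  set (x := v1+t*h1) in *. set (y := v2+t*h2) in *.
  set (S := sqrt (x^2 + y^2)) in *.
  replace (dG_form a b c d x y h1 h2 / S ^ 3)
    with ((S*S*((3*a*x^2+b*y^2)*h1^2 + 2*(b+c)*x*y*h1*h2 + (c*x^2+3*d*y^2)*h2^2)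
           - cubic_dot a b c d x y h1 h2 * (x*h1 + y*h2)) / (S*S*S)).
  2: { replace (S ^ 3) with (S * S * S) by ring. rewrite hSS.
       unfold dG_form, cubic_dot. field. split; lra. }
  subst x y S. apply is_derive_Reals. unfold segment_dot, cubic_dot.
  auto_derive.
  - repeat split; try nra. apply Rgt_not_eq. exact hS.
  - simpl. set (S := sqrt _). field. apply Rgt_not_eq. exact hS.
Qed.

Section Estimates.

Variables a b c d : R.
Hypotheses (ha : 0 < a) (hb : 0 < b) (hc : 0 < c) (hd : 0 < d).

Lemma G_B_dot_self_lower_bound h1 h2 :
  Rmin a d / 2 * norm2 (h1, h2) ^ 3 <= dot2 (G_B a b c d (h1, h2)) (h1, h2).
Proof.
  unfold norm2; cbn [fst snd].
  destruct (Req_dec (h1 ^ 2 + h2 ^ 2) 0) as [h0|hH].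
  - rewrite h0, sqrt_0. destruct (sum_squares_eq0 _ _ h0) as [-> ->].
    unfold dot2; cbn [fst snd]. lra.
  - assert (hH' : 0 < h1 ^ 2 + h2 ^ 2)
      by (pose proof (pow2_ge_0 h1); pose proof (pow2_ge_0 h2); lra).
    rewrite G_B_dot by exact hH'.
    assert (hS : 0 < sqrt (h1 ^ 2 + h2 ^ 2)) by (apply sqrt_lt_R0; lra).
    assert (hSS := sqrt_sqrt _ (Rlt_le _ _ hH')).
    set (S := sqrt (h1 ^ 2 + h2 ^ 2)) in *.
    apply Rmult_le_reg_r with S; [exact hS|].
    replace (cubic_dot a b c d h1 h2 h1 h2 / S * S) with (cubic_dot a b c d h1 h2 h1 h2)
      by (field; lra).
    replace (Rmin a d / 2 * S ^ 3 * S) with (Rmin a d / 2 * (h1 ^ 2 + h2 ^ 2) ^ 2)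
      by (rewrite <- hSS; ring).
    assert (hm1 := Rmin_l a d). assert (hm2 := Rmin_r a d).
    assert (0 < Rmin a d) by (apply Rmin_glb_lt; lra).
    unfold cubic_dot.
    pose proof (pow2_ge_0 (h1 ^ 2 - h2 ^ 2)).
    assert (0 <= h1 ^ 2 * h2 ^ 2) by nra.
    assert (0 <= h1 ^ 4) by (replace (h1 ^ 4) with ((h1 ^ 2) ^ 2) by ring; apply pow2_ge_0).
    assert (0 <= h2 ^ 4) by (replace (h2 ^ 4) with ((h2 ^ 2) ^ 2) by ring; apply pow2_ge_0).
    assert (Rmin a d * h1 ^ 4 <= a * h1 ^ 4) by (apply Rmult_le_compat_r; lra).
    assert (Rmin a d * h2 ^ 4 <= d * h2 ^ 4) by (apply Rmult_le_compat_r; lra).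
    nra.
Qed.

Lemma G_B_increment_collinear l h1 h2 :
  Rmin a d / 4 * norm2 (h1, h2) ^ 3 <=
  dot2 (G_B a b c d ((l + 1) * h1, (l + 1) * h2)) (h1, h2)
  - dot2 (G_B a b c d (l * h1, l * h2)) (h1, h2).
Proof.
  rewrite !G_B_dot_scale.
  assert (hself := G_B_dot_self_lower_bound h1 h2).
  assert (hl := signed_square_increment l).
  assert (0 <= Rmin a d / 2 * norm2 (h1, h2) ^ 3).
  { apply Rmult_le_pos; [assert (0 < Rmin a d) by (apply Rmin_glb_lt; lra); lra|].
    apply pow_le, sqrt_pos. }
  replace (Rmin a d / 4 * norm2 (h1, h2) ^ 3)
    with (1 / 2 * (Rmin a d / 2 * norm2 (h1, h2) ^ 3)) by field.
  replace ((l + 1) * Rabs (l + 1) * dot2 (G_B a b c d (h1, h2)) (h1, h2)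
           - l * Rabs l * dot2 (G_B a b c d (h1, h2)) (h1, h2))
    with (((l + 1) * Rabs (l + 1) - l * Rabs l) * dot2 (G_B a b c d (h1, h2)) (h1, h2))
    by ring.
  apply Rmult_le_compat; lra.
Qed.

Hypotheses (hal : (2*b+c-a)^2 <= 16*(a*d)) (hbe : (b+2*c-d)^2 <= 16*(a*d)).

Lemma dG_discriminant_lower_bound X Y : 0 <= X -> 0 <= Y ->
  Rmin (a * c) (b * d) * (X + Y) ^ 4 <=
  4 * (2*a*X^2 + 3*a*X*Y + b*Y^2) * (c*X^2 + 3*d*X*Y + 2*d*Y^2)
  - X * Y * ((2*b+c-a)*X + (b+2*c-d)*Y) ^ 2.
Proof.
  intros hX hY.
  set (al := 2*b+c-a) in *. set (be := b+2*c-d) in *.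
  assert (e : 4 * (2*a*X^2 + 3*a*X*Y + b*Y^2) * (c*X^2 + 3*d*X*Y + 2*d*Y^2)
              - X * Y * (al*X + be*Y) ^ 2
              = 8*(a*c)*X^4 + 8*(b*d)*Y^4
                + X*Y*((24*a*d+12*a*c-al^2)*X^2 + (52*a*d+4*b*c-2*al*be)*X*Y
                       + (24*a*d+12*b*d-be^2)*Y^2)) by (unfold al, be; ring).
  rewrite e.
  assert (hm1 := Rmin_l (a*c) (b*d)). assert (hm2 := Rmin_r (a*c) (b*d)).
  set (m := Rmin (a*c) (b*d)) in *.
  assert (hm : 0 < m) by (apply Rmin_glb_lt; nra).
  assert (hpm : (X + Y) ^ 4 <= 8 * (X ^ 4 + Y ^ 4)).
  { assert ((X + Y) ^ 2 <= 2 * (X ^ 2 + Y ^ 2)) by (pose proof (pow2_ge_0 (X - Y)); nra).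
    assert ((X ^ 2 + Y ^ 2) ^ 2 <= 2 * (X ^ 4 + Y ^ 4))
      by (pose proof (pow2_ge_0 (X ^ 2 - Y ^ 2)); nra).
    replace ((X + Y) ^ 4) with ((X + Y) ^ 2 * (X + Y) ^ 2) by ring.
    pose proof (pow2_ge_0 (X + Y)).
    assert ((X + Y) ^ 2 * (X + Y) ^ 2 <= (2 * (X ^ 2 + Y ^ 2)) * (2 * (X ^ 2 + Y ^ 2)))
      by (apply Rmult_le_compat; lra).
    lra. }
  (* The hypotheses on [al] and [be] are what makes the [X*Y] part nonnegative. *)
  assert (hab2 : 2*al*be <= al^2 + be^2) by (pose proof (pow2_ge_0 (al-be)); nra).
  assert (0 <= (24*a*d+12*a*c-al^2)*X^2 + (52*a*d+4*b*c-2*al*be)*X*Y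
               + (24*a*d+12*b*d-be^2)*Y^2).
  { assert (0 <= 24*a*d+12*a*c-al^2) by nra.
    assert (0 <= 52*a*d+4*b*c-2*al*be) by nra.
    assert (0 <= 24*a*d+12*b*d-be^2) by nra.
    assert (0 <= X*Y) by nra. assert (0 <= X^2) by nra. assert (0 <= Y^2) by nra. nra. }
  assert (0 <= X * Y) by nra. assert (0 <= X ^ 4) by nra. assert (0 <= Y ^ 4) by nra.
  nra.
Qed.

Lemma dG_form_lower_bound x y p q : 0 < x ^ 2 + y ^ 2 ->
  Rmin (a * c) (b * d) * (x ^ 2 + y ^ 2) ^ 2 * (p ^ 2 + q ^ 2)
  <= 4 * (5*a+b+c+5*d) * dG_form a b c d x y p q.
Proof.
  intros hr.
  assert (hX : 0 <= x ^ 2) by nra. assert (hY : 0 <= y ^ 2) by nra.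
  assert (hm : 0 < Rmin (a * c) (b * d)) by (apply Rmin_glb_lt; nra).
  assert (hbound := quad_form_lower_bound
    (2*a*(x^2)^2 + 3*a*x^2*y^2 + b*(y^2)^2)
    (x*y*((2*b+c-a)*x^2 + (b+2*c-d)*y^2))
    (c*(x^2)^2 + 3*d*x^2*y^2 + 2*d*(y^2)^2)
    (Rmin (a * c) (b * d) * (x ^ 2 + y ^ 2) ^ 4)
    ((5*a+b+c+5*d) * (x ^ 2 + y ^ 2) ^ 2) p q).
  assert (e : 4 * ((5*a+b+c+5*d) * (x ^ 2 + y ^ 2) ^ 2)
              * ((2*a*(x^2)^2 + 3*a*x^2*y^2 + b*(y^2)^2) * p ^ 2
                 + x*y*((2*b+c-a)*x^2 + (b+2*c-d)*y^2) * p * q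
                 + (c*(x^2)^2 + 3*d*x^2*y^2 + 2*d*(y^2)^2) * q ^ 2)
              = (x ^ 2 + y ^ 2) ^ 2 * (4 * (5*a+b+c+5*d) * dG_form a b c d x y p q))
    by (unfold dG_form; ring).
  rewrite e in hbound.
  apply Rmult_le_reg_l with ((x ^ 2 + y ^ 2) ^ 2); [nra|].
  replace ((x ^ 2 + y ^ 2) ^ 2 * (Rmin (a * c) (b * d) * (x ^ 2 + y ^ 2) ^ 2 * (p ^ 2 + q ^ 2)))
    with (Rmin (a * c) (b * d) * (x ^ 2 + y ^ 2) ^ 4 * (p ^ 2 + q ^ 2)) by ring.
  assert (hXY : 0 <= x ^ 2 * y ^ 2) by nra.
  assert (hX2 : 0 <= (x ^ 2) ^ 2) by nra. assert (hY2 : 0 <= (y ^ 2) ^ 2) by nra.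
  apply hbound.
  - nra.
  - nra.
  - apply Rmult_le_pos; [lra | apply pow_le; lra].
  - replace ((x * y * ((2*b+c-a)*x^2 + (b+2*c-d)*y^2)) ^ 2)
      with (x ^ 2 * y ^ 2 * ((2*b+c-a)*x^2 + (b+2*c-d)*y^2) ^ 2) by ring.
    apply dG_discriminant_lower_bound; assumption.
  - nra.
Qed.

Lemma dG_form_div_lower_bound x y p q : 0 < x ^ 2 + y ^ 2 ->
  Rmin (a * c) (b * d) / (4 * (5*a+b+c+5*d)) * sqrt (x ^ 2 + y ^ 2) * (p ^ 2 + q ^ 2)
  <= dG_form a b c d x y p q / sqrt (x ^ 2 + y ^ 2) ^ 3.
Proof.
  intros hr.
  assert (hbound := dG_form_lower_bound x y p q hr).
  assert (hS : 0 < sqrt (x ^ 2 + y ^ 2)) by (apply sqrt_lt_R0; lra).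
  assert (hSS := sqrt_sqrt _ (Rlt_le _ _ hr)).
  set (S := sqrt (x ^ 2 + y ^ 2)) in *.
  apply Rmult_le_reg_r with (4 * (5*a+b+c+5*d) * S ^ 3).
  { apply Rmult_lt_0_compat; [lra | apply pow_lt, hS]. }
  replace (Rmin (a * c) (b * d) / (4 * (5*a+b+c+5*d)) * S * (p ^ 2 + q ^ 2)
           * (4 * (5*a+b+c+5*d) * S ^ 3))
    with (Rmin (a * c) (b * d) * (x ^ 2 + y ^ 2) ^ 2 * (p ^ 2 + q ^ 2))
    by (rewrite <- hSS; field; lra).
  replace (dG_form a b c d x y p q / S ^ 3 * (4 * (5*a+b+c+5*d) * S ^ 3))
    with (4 * (5*a+b+c+5*d) * dG_form a b c d x y p q) by (field; lra).
  exact hbound.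
Qed.

Lemma G_B_increment_noncollinear v1 v2 h1 h2 : v1 * h2 - v2 * h1 <> 0 ->
  Rmin (a * c) (b * d) / (64 * (5*a+b+c+5*d)) * norm2 (h1, h2) ^ 3
  <= dot2 (G_B a b c d (v1 + h1, v2 + h2)) (h1, h2) - dot2 (G_B a b c d (v1, v2)) (h1, h2).
Proof.
  intros hx.
  set (kappa := Rmin (a * c) (b * d) / (4 * (5*a+b+c+5*d))).
  assert (hkappa : 0 < kappa).
  { apply Rdiv_lt_0_compat; [apply Rmin_glb_lt; nra | lra]. }
  assert (hq := fun t => segment_avoids_origin v1 v2 h1 h2 t hx).
  assert (hH : 0 < h1 ^ 2 + h2 ^ 2).
  { pose proof (pow2_ge_0 h1); pose proof (pow2_ge_0 h2).
    destruct (Req_dec (h1 ^ 2 + h2 ^ 2) 0) as [h0|]; [|lra].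
    destruct (sum_squares_eq0 _ _ h0) as [-> ->]. exfalso. apply hx. ring. }
  assert (e1 : dot2 (G_B a b c d (v1 + h1, v2 + h2)) (h1, h2) = segment_dot a b c d v1 v2 h1 h2 1).
  { unfold segment_dot. rewrite !Rmult_1_l. apply G_B_dot.
    specialize (hq 1). rewrite !Rmult_1_l in hq. exact hq. }
  assert (e0 : dot2 (G_B a b c d (v1, v2)) (h1, h2) = segment_dot a b c d v1 v2 h1 h2 0).
  { unfold segment_dot. rewrite !Rmult_0_l, !Rplus_0_r. apply G_B_dot.
    specialize (hq 0). rewrite !Rmult_0_l, !Rplus_0_r in hq. exact hq. }
  rewrite e1, e0. unfold norm2; cbn [fst snd].
  set (H := h1 ^ 2 + h2 ^ 2) in *.
  assert (hS : 0 < sqrt H) by (apply sqrt_lt_R0, hH).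
  assert (hSS := sqrt_sqrt _ (Rlt_le _ _ hH)).
  assert (hder := fun t => dG_form_div_lower_bound (v1 + t * h1) (v2 + t * h2) h1 h2 (hq t)).
  fold kappa H in hder.
  assert (hfar : forall t, H / 16 <= (v1 + t * h1) ^ 2 + (v2 + t * h2) ^ 2 ->
            kappa / 4 * sqrt H ^ 3 <=
            dG_form a b c d (v1 + t * h1) (v2 + t * h2) h1 h2
            / sqrt ((v1 + t * h1) ^ 2 + (v2 + t * h2) ^ 2) ^ 3).
  { intros t ht. eapply Rle_trans; [|apply hder].
    assert (sqrt H / 4 <= sqrt ((v1 + t * h1) ^ 2 + (v2 + t * h2) ^ 2)).
    { replace (sqrt H / 4) with (sqrt (H / 16)).
      - apply sqrt_le_1_alt, ht.
      - rewrite sqrt_div_alt by lra. replace 16 with (4 * 4) by ring.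
        rewrite sqrt_square; lra. }
    replace (kappa / 4 * sqrt H ^ 3) with (kappa * (sqrt H / 4) * (sqrt H * sqrt H)) by field.
    rewrite hSS.
    apply Rmult_le_compat_r; [lra|]. apply Rmult_le_compat_l; lra. }
  replace (Rmin (a * c) (b * d) / (64 * (5*a+b+c+5*d)) * sqrt H ^ 3)
    with (kappa / 4 * sqrt H ^ 3 / 4) by (unfold kappa; field; lra).
  apply increment_lower_bound with
    (f' := fun t => dG_form a b c d (v1 + t * h1) (v2 + t * h2) h1 h2
                    / sqrt ((v1 + t * h1) ^ 2 + (v2 + t * h2) ^ 2) ^ 3).
  - intros t _. apply segment_dot_derivative, hq.
  - intros t _. eapply Rle_trans; [|apply hder].
    apply Rmult_le_pos; [apply Rmult_le_pos; [lra | apply sqrt_pos] | lra].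
  - destruct (segment_quarter_far_from_origin v1 v2 h1 h2 hH) as [hn|hn];
      [left|right]; intros t ht; apply hfar, hn, ht.
Qed.

Lemma G_B_increment_lower_bound v1 v2 h1 h2 :
  Rmin (Rmin (a * c) (b * d) / (64 * (5*a+b+c+5*d))) (Rmin a d / 4) * norm2 (h1, h2) ^ 3
  <= dot2 (G_B a b c d (v1 + h1, v2 + h2)) (h1, h2) - dot2 (G_B a b c d (v1, v2)) (h1, h2).
Proof.
  assert (hn : 0 <= norm2 (h1, h2) ^ 3) by (apply pow_le, sqrt_pos).
  destruct (Req_dec (v1 * h2 - v2 * h1) 0) as [hx|hx].
  - destruct (Req_dec (h1 ^ 2 + h2 ^ 2) 0) as [h0|hH].
    + unfold norm2; cbn [fst snd]. rewrite h0, sqrt_0.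
      destruct (sum_squares_eq0 _ _ h0) as [-> ->]. unfold dot2; cbn [fst snd]. lra.
    + (* [v] and [v + h] lie on the line spanned by [h]. *)
      set (l := (v1 * h1 + v2 * h2) / (h1 ^ 2 + h2 ^ 2)).
      assert (ev1 : v1 = l * h1).
      { apply Rminus_diag_uniq.
        replace (v1 - l * h1) with (h2 * (v1 * h2 - v2 * h1) / (h1 ^ 2 + h2 ^ 2))
          by (unfold l; field; exact hH).
        rewrite hx. field. exact hH. }
      assert (ev2 : v2 = l * h2).
      { apply Rminus_diag_uniq.
        replace (v2 - l * h2) with (- h1 * (v1 * h2 - v2 * h1) / (h1 ^ 2 + h2 ^ 2))
          by (unfold l; field; exact hH).
        rewrite hx. field. exact hH. }
      replace (v1 + h1, v2 + h2) with ((l + 1) * h1, (l + 1) * h2)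
        by (rewrite ev1, ev2; f_equal; ring).
      rewrite ev1, ev2.
      eapply Rle_trans; [|apply G_B_increment_collinear].
      apply Rmult_le_compat_r; [exact hn | apply Rmin_r].
  - eapply Rle_trans; [|apply G_B_increment_noncollinear, hx].
    apply Rmult_le_compat_r; [exact hn | apply Rmin_l].
Qed.

Lemma G_B_three_monotone : alpha_monotone2 3 (G_B a b c d).
Proof.
  exists (Rmin (Rmin (a * c) (b * d) / (64 * (5*a+b+c+5*d))) (Rmin a d / 4)). split.
  { apply Rmin_glb_lt; apply Rdiv_lt_0_compat; try lra;
      apply Rmin_glb_lt; nra. }
  intros [u1 u2] [v1 v2].
  rewrite rpow_3 by apply sqrt_pos.
  replace (dot2 (sub2 (G_B a b c d (u1, u2)) (G_B a b c d (v1, v2))) (sub2 (u1, u2) (v1, v2)))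
    with (dot2 (G_B a b c d (v1 + (u1 - v1), v2 + (u2 - v2))) (u1 - v1, u2 - v2)
          - dot2 (G_B a b c d (v1, v2)) (u1 - v1, u2 - v2)).
  - apply G_B_increment_lower_bound.
  - replace (v1 + (u1 - v1)) with u1 by ring. replace (v2 + (u2 - v2)) with u2 by ring.
    unfold dot2, sub2; cbn [fst snd]. ring.
Qed.

End Estimates.

Lemma coefficient_conditions a b c d : 0 < a -> 0 < d ->
  Rmax (a + c) (b + d) <= 2 * (b + c + 2 * sqrt (a * d)) ->
  2 * (b + c - 2 * sqrt (a * d)) <= Rmin (a + c) (b + d) ->
  (2*b+c-a)^2 <= 16*(a*d) /\ (b+2*c-d)^2 <= 16*(a*d).
Proof.
  intros ha hd h1 h2.
  pose proof (Rmax_l (a+c) (b+d)). pose proof (Rmax_r (a+c) (b+d)).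
  pose proof (Rmin_l (a+c) (b+d)). pose proof (Rmin_r (a+c) (b+d)).
  assert (hs : sqrt (a*d) * sqrt (a*d) = a*d) by (apply sqrt_sqrt; nra).
  pose proof (sqrt_pos (a*d)).
  set (s := sqrt (a*d)) in *.
  split.
  - assert (0 <= (4*s - (2*b+c-a))*(4*s + (2*b+c-a))) by (apply Rmult_le_pos; lra). nra.
  - assert (0 <= (4*s - (b+2*c-d))*(4*s + (b+2*c-d))) by (apply Rmult_le_pos; lra). nra.
Qed.

Theorem mainTheorem3 (a b c d : R) (ha : 0 < a) (hb : 0 < b) (hc : 0 < c) (hd : 0 < d) :
  (Rmax (a + c) (b + d) <= 2 * (b + c + 2 * sqrt (a * d)) /\
   2 * (b + c - 2 * sqrt (a * d)) <= Rmin (a + c) (b + d) ->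
   monotone2 (G_B a b c d)) /\
  (Rmax (a + c) (b + d) < 2 * (b + c + 2 * sqrt (a * d)) /\
   2 * (b + c - 2 * sqrt (a * d)) < Rmin (a + c) (b + d) ->
   alpha_monotone2 3 (G_B a b c d)).
Proof.
  split; intros [h1 h2];
    destruct (coefficient_conditions a b c d ha hd) as [hal hbe]; try lra.
  - destruct (G_B_three_monotone a b c d ha hb hc hd hal hbe) as [C [hC hmono]].
    intros u v. eapply Rle_trans; [|apply hmono].
    apply Rmult_le_pos; [lra | apply rpow_nonneg].
  - exact (G_B_three_monotone a b c d ha hb hc hd hal hbe).
Qed.
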